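(* Let $R$ be a commutative elementary divisor domain, let $S\in GL_n(R)$, and let $\Phi=\mathrm{diag}(\varphi_1,\dots,\varphi_n)$ be a nonsingular $n\times n$ $d$-matrix. The group $\mathbf G_\Phi$ contains a matrix $H$ such that $HS$ is a lower unitriangular matrix if and only if $$\Big(\frac{\varphi_{i+1}}{\varphi_i},\ \det S_{(i+1)}\Big)=1\quad\text{for } i=1,\dots,n-1,$$ where $S_{(i)}$ denotes the submatrix of $S$ formed by rows $i,\dots,n$ and columns $i,\dots,n$.
   Context: An elementary divisor ring is a ring over which every matrix is equivalent (i.e. $PAQ$ with $P,Q$ invertible) to a $d$-matrix, a diagonal matrix $\mathrm{diag}(\varphi_1,\dots)$ with $\varphi_i\mid\varphi_{i+1}$; such commutative domains are Bezout domains (every finitely generated ideal principal). For an $n\times n$ $d$-matrix $\Phi$, $\mathbf G_\Phi=\{H\in GL_n(R):\ \exists K\in GL_n(R),\ H\Phi=\Phi K\}$. A lower unitriangular matrix is a lower triangular matrix with all diagonal entries equal to $1$. *)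

From HB Require Import structures.
From mathcomp Require Import all_boot all_order all_algebra.
Set Implicit Arguments. Unset Strict Implicit. Unset Printing Implicit Defensive.
Import GRing.Theory.
Local Open Scope ring_scope.

Definition dvdR (R : comNzRingType) (a b : R) : Prop := exists c : R, b = c * a.

Definition coprimeR (R : comNzRingType) (a b : R) : Prop :=
  forall d : R, dvdR d a -> dvdR d b -> dvdR d 1.

Definition is_dmx (R : comNzRingType) (m n : nat) (D : 'M[R]_(m, n)) : Prop :=
  (forall (i : 'I_m) (j : 'I_n), (i : nat) <> (j : nat) -> D i j = 0) /\
  (forall (i i' : 'I_m) (j j' : 'I_n),
      (i : nat) = j -> (i' : nat) = j' -> (i' : nat) = i.+1 ->
      dvdR (D i j) (D i' j')).

Definition elementary_divisor_ring (R : comUnitRingType) : Prop :=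
  forall (m n : nat) (A : 'M[R]_(m, n)),
    exists (P : 'M[R]_m) (Q : 'M[R]_n),
      P \in unitmx /\ Q \in unitmx /\ is_dmx (P *m A *m Q).

Definition G_Phi (R : comUnitRingType) (n : nat) (Phi : 'M[R]_n) (H : 'M[R]_n)
  : Prop :=
  H \in unitmx /\ exists K : 'M[R]_n, K \in unitmx /\ H *m Phi = Phi *m K.

Definition lower_unitriangular (R : nzRingType) (n : nat) (M : 'M[R]_n) : Prop :=
  (forall i j : 'I_n, (i < j)%N -> M i j = 0) /\ (forall i : 'I_n, M i i = 1).

(* Trailing principal submatrix: rows and columns k, ..., n-1 (0-based). *)
Definition trail_idx (n k : nat) (a : 'I_(n - k)) : 'I_n :=
  insubd (widen_ord (leq_subr k n) a) (a + k)%N.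

Definition trail (R : Type) (n k : nat) (S : 'M[R]_n) : 'M[R]_(n - k) :=
  \matrix_(a, b) S (trail_idx a) (trail_idx b).

From HB Require Import structures.
From mathcomp Require Import all_boot all_order all_algebra zify ring.
Set Implicit Arguments. Unset Strict Implicit. Unset Printing Implicit Defensive.
Import GRing.Theory.
Local Open Scope ring_scope.

(* Write [phi_(i+1) = q_i phi_i]. Then [H] lies in [G_Phi] iff [H] is invertible
   and [q_s ... q_(r-1)] divides [H_rs] for [s < r].
   Necessity: [G = H^-1] also lies in [G_Phi], and [S = G L] with [L] lower
   unitriangular, so [\det S_(i+1) = \det G_(i+1)]. Modulo [q_i] the block of [G]
   below row [i] and left of column [i+1] vanishes, hence
   [\det G = \det G_11 * \det S_(i+1)] modulo [q_i], and [\det G] is a unit.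
   Sufficiency: combining Bezout identities (available in an elementary divisor
   ring) with Cramer's rule, one builds column by column a lower unitriangular [L]
   such that [S L] lies in [G_Phi]; then [H = (S L)^-1] works, with [H S = L^-1]. *)

Section Divisibility.
Variable R : comNzRingType.
Implicit Types (d x y : R).

Lemma dvdR0 d : dvdR d 0.
Proof. by exists 0; rewrite mul0r. Qed.

Lemma dvdRR d : dvdR d d.
Proof. by exists 1; rewrite mul1r. Qed.

Lemma dvdR_trans x d y : dvdR d x -> dvdR x y -> dvdR d y.
Proof. by move=> [a ->] [b ->]; exists (b * a); rewrite mulrA. Qed.

Lemma dvdRD d x y : dvdR d x -> dvdR d y -> dvdR d (x + y).
Proof. by move=> [a ->] [b ->]; exists (a + b); rewrite mulrDl. Qed.

Lemma dvdR_mull d x y : dvdR d y -> dvdR d (x * y).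
Proof. by move=> [a ->]; exists (x * a); rewrite mulrA. Qed.

Lemma dvdR_mulr d x y : dvdR d x -> dvdR d (x * y).
Proof. by rewrite mulrC; apply: dvdR_mull. Qed.

Lemma dvdR_mul2l c x y : dvdR x y -> dvdR (c * x) (c * y).
Proof. by move=> [a ->]; exists a; rewrite mulrCA. Qed.

Lemma dvdR_sum d (I : finType) (F : I -> R) :
  (forall i, dvdR d (F i)) -> dvdR d (\sum_i F i).
Proof. by move=> dF; apply: big_ind => //; [apply: dvdR0 | apply: dvdRD]. Qed.

Lemma dvdR_mulmxl d m n p (A : 'M[R]_(m, n)) (B : 'M[R]_(n, p)) :
  (forall i j, dvdR d (B i j)) -> forall i j, dvdR d ((A *m B) i j).
Proof. by move=> dB i j; rewrite mxE; apply: dvdR_sum => k; apply: dvdR_mull. Qed.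

Lemma dvdR_mulmxr d m n p (A : 'M[R]_(m, n)) (B : 'M[R]_(n, p)) :
  (forall i j, dvdR d (A i j)) -> forall i j, dvdR d ((A *m B) i j).
Proof. by move=> dA i j; rewrite mxE; apply: dvdR_sum => k; apply: dvdR_mulr. Qed.

Lemma dvdR_prod_nat (q : nat -> R) a b k : (a <= k < b)%N -> dvdR (q k) (\prod_(a <= l < b) q l).
Proof.
move=> /andP[ak kb]; rewrite (big_cat_nat ak (ltnW kb)) (big_ltn kb) /=.
by apply: dvdR_mull; apply: dvdR_mulr; apply: dvdRR.
Qed.

Lemma dvdR_det_sub d n (A B : 'M[R]_n) :
  (forall i j, dvdR d (A i j - B i j)) -> dvdR d (\det A - \det B).
Proof.
pose congr x y := dvdR d (x - y).
have congrR x : congr x x by rewrite /congr subrr; apply: dvdR0.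
have congrD x x' y y' : congr x x' -> congr y y' -> congr (x + y) (x' + y').
  move=> dx dy; rewrite /congr (_ : _ - _ = (x - x') + (y - y')); last by ring.
  exact: dvdRD.
have congrM x x' y y' : congr x x' -> congr y y' -> congr (x * y) (x' * y').
  move=> dx dy; rewrite /congr (_ : _ - _ = (x - x') * y + x' * (y - y')); last by ring.
  by apply: dvdRD; [apply: dvdR_mulr | apply: dvdR_mull].
move=> dAB; apply: (big_ind2 congr) => [||s _]; [exact: congrR | exact: congrD |].
apply: (congrM); first exact: congrR.
by apply: (big_ind2 congr) => [||i _]; [exact: congrR | exact: congrM | exact: dAB].
Qed.

End Divisibility.

Lemma coprimeR_bezout (R : comUnitRingType) (HR : elementary_divisor_ring R) (a b : R) :
  coprimeR a b -> exists u v, u * a + v * b = 1.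
Proof.
move=> coab; pose A : 'M[R]_(1, 2) := \row_j if j == 0 then a else b.
have [P [Q [unitP [unitQ [D0 _]]]]] := HR _ _ A.
move DE : (P *m A *m Q) D0 => D D0.
have dD i j : dvdR (D 0 0) (D i j).
  rewrite (ord1 i); have [->|j_neq0] := eqVneq j 0; first exact: dvdRR.
  rewrite [D 0 j]D0; first exact: dvdR0.
  by move=> j0; rewrite -val_eqE /= -j0 in j_neq0.
have dA j : dvdR (D 0 0) (A 0 j).
  have -> : A = invmx P *m D *m invmx Q.
    by rewrite -DE !mulmxA mulVmx // mul1mx -mulmxA mulmxV // mulmx1.
  exact/dvdR_mulmxr/dvdR_mulmxl.
have [e de] : dvdR (D 0 0) 1.
  by apply: coab; [move: (dA 0) | move: (dA 1)]; rewrite mxE; apply.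
have D00 : D 0 0 = P 0 0 * (a * Q 0 0 + b * Q 1 0).
  rewrite -DE !mxE !big_ord_recl !big_ord0 !mxE !big_ord_recl !big_ord0 !mxE /=.
  by rewrite (_ : lift ord0 ord0 = 1 :> 'I_2); [ring | apply: val_inj].
by exists (e * P 0 0 * Q 0 0), (e * P 0 0 * Q 1 0); rewrite de D00; ring.
Qed.

Lemma trail_idxE n k (a : 'I_(n - k)) : val (trail_idx a) = (a + k)%N.
Proof. by rewrite /trail_idx val_insubd; case: ifP => //= /negbT; have := ltn_ord a; lia. Qed.

Lemma trail_drsubmx (R : Type) n k (A : 'M[R]_(1 + n)) :
  trail k.+1 A = trail k (drsubmx A).
Proof.
apply/matrixP => a b; rewrite !mxE; congr (A _ _).
all: by apply: val_inj; rewrite /= !trail_idxE addnS.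
Qed.

Lemma trail_castmx (R : Type) n k (e : n = (k + (n - k))%N) (A : 'M[R]_n) :
  trail k A = drsubmx (castmx (e, e) A).
Proof.
apply/matrixP => a b; rewrite !mxE castmxE; congr (A _ _).
all: by apply: val_inj; rewrite /= !trail_idxE addnC.
Qed.

Lemma det_castmx (R : comNzRingType) n m (e : n = m) (A : 'M[R]_n) :
  \det (castmx (e, e) A) = \det A.
Proof. by case: m / e; rewrite castmx_id. Qed.

Lemma castmx_mulmx (R : nzRingType) n m (e : n = m) (A B : 'M[R]_n) :
  castmx (e, e) (A *m B) = castmx (e, e) A *m castmx (e, e) B.
Proof. by case: m / e; rewrite !castmx_id. Qed.

Lemma det_trail0 (R : comNzRingType) n (A : 'M[R]_n) : \det (trail 0 A) = \det A.
Proof.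
have e : n = (n - 0)%N by rewrite subn0.
rewrite -(det_castmx e A); congr (\det _); apply/matrixP => a b.
by rewrite !mxE castmxE; congr (A _ _); apply: val_inj; rewrite /= trail_idxE addn0.
Qed.

Section LowerUnitriangular.
Variable R : nzRingType.

Lemma lower_unitriangular_trig n (L : 'M[R]_n) : lower_unitriangular L -> is_trig_mx L.
Proof. by case=> L0 _; apply/is_trig_mxP. Qed.

Lemma lower_unitriangular_castmx n m (e : n = m) (L : 'M[R]_n) :
  lower_unitriangular L -> lower_unitriangular (castmx (e, e) L).
Proof. by case: m / e; rewrite castmx_id. Qed.

Lemma lower_unitriangular_drsubmx k m (L : 'M[R]_(k + m)) :
  lower_unitriangular L -> lower_unitriangular (drsubmx L).
Proof.
case=> L0 L1; split=> [i j ij|i]; rewrite !mxE; [apply: L0 | exact: L1].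
by rewrite /= ltn_add2l.
Qed.

Lemma lower_unitriangular_block n (y : 'cV[R]_n) (L : 'M[R]_n) :
  lower_unitriangular L -> lower_unitriangular (block_mx 1%:M 0 y L : 'M_(1 + n)).
Proof.
move=> lowL; split=> [|i].
  apply/is_trig_mxP; rewrite is_trig_block_mx // eqxx mx11_is_trig.
  exact: lower_unitriangular_trig.
rewrite -[i]splitK; case: (split i) => i' /=.
  by rewrite block_mxEul (ord1 i') mxE.
by rewrite block_mxEdr; apply: lowL.2.
Qed.

Lemma lower_unitriangular_rinv n (L : 'M[R]_n) :
  lower_unitriangular L -> exists2 Li, lower_unitriangular Li & L *m Li = 1%:M.
Proof.
elim: n L => [|n IHn] L lowL; first by exists 1%:M; [split=> [[]|[]] | rewrite !thinmx0].
move: L lowL; rewrite -[n.+1]/(1 + n)%N => L lowL.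
have [Li lowLi LLi] := IHn _ (lower_unitriangular_drsubmx lowL).
have ulL : ulsubmx L = 1%:M.
  by apply/matrixP => i j; rewrite !ord1 !mxE lowL.2.
exists (block_mx 1%:M 0 (- (Li *m dlsubmx L)) Li).
  exact: lower_unitriangular_block.
rewrite -{1}[L]submxK ulL (ursubmx_trig _ (lower_unitriangular_trig lowL)) //.
rewrite mulmx_block !mulmx0 !mul0mx !mulmx1 !addr0 !add0r mulmxN mulmxA LLi mul1mx subrr.
by rewrite -scalar_mx_block.
Qed.

End LowerUnitriangular.

Lemma det_lower_unitriangular (R : comNzRingType) n (L : 'M[R]_n) :
  lower_unitriangular L -> \det L = 1.
Proof.
move=> lowL; rewrite det_trig; last exact: lower_unitriangular_trig.
by apply: big1 => i _; apply: lowL.2.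
Qed.

Lemma lower_unitriangular_invmx (R : comUnitRingType) n (L : 'M[R]_n) :
  lower_unitriangular L -> lower_unitriangular (invmx L).
Proof.
move=> lowL; have [Li lowLi LLi] := lower_unitriangular_rinv lowL.
have [unitL _] := mulmx1_unit LLi.
suff -> : invmx L = Li by [].
by rewrite -[Li]mul1mx -(mulVmx unitL) -mulmxA LLi mulmx1.
Qed.

Lemma det_trail_mul_lower_unitriangular (R : comNzRingType) n k (G L : 'M[R]_n) :
  (k <= n)%N -> lower_unitriangular L -> \det (trail k (G *m L)) = \det (trail k G).
Proof.
move=> kn lowL; have e : n = (k + (n - k))%N by rewrite subnKC.
rewrite !(trail_castmx e) castmx_mulmx.
have {}lowL := lower_unitriangular_castmx e lowL.
set cG := castmx _ G; set cL := castmx _ L in lowL *.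
rewrite -[cG]submxK -[cL]submxK (ursubmx_trig _ (lower_unitriangular_trig lowL)) //.
rewrite mulmx_block !block_mxKdr mulmx0 add0r det_mulmx.
by rewrite (det_lower_unitriangular (lower_unitriangular_drsubmx lowL)) mulr1.
Qed.

Lemma det_congr_trail (R : comNzRingType) n k (G : 'M[R]_n) (q : R) : (k <= n)%N ->
  (forall i j : 'I_n, (j < k <= i)%N -> dvdR q (G i j)) ->
  exists a, dvdR q (\det G - a * \det (trail k G)).
Proof.
move=> kn dG; have e : n = (k + (n - k))%N by rewrite subnKC.
set cG := castmx (e, e) G.
exists (\det (ulsubmx cG)); rewrite (trail_castmx e) -/cG -(det_castmx e) -/cG.
rewrite -(det_ublock _ (ursubmx cG)); apply: dvdR_det_sub => i j.
rewrite -{1}[cG]submxK.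
case: (split_ordP i) => i' ->; case: (split_ordP j) => j' ->;
  rewrite ?block_mxEul ?block_mxEur ?block_mxEdl ?block_mxEdr ?subrr; try exact: dvdR0.
rewrite !mxE subr0 castmxE; apply: dG => /=.
by rewrite ltn_ord leq_addr.
Qed.

Section Reduction.
Variables (R : comUnitRingType) (HR : elementary_divisor_ring R).

Lemma mulmx_solvable_mod_prefix_prod m (N : 'M[R]_m) (q : nat -> R) :
    (forall k, (k < m)%N -> coprimeR (q k) (\det (trail k N))) ->
  forall t : 'cV[R]_m, exists x : 'cV[R]_m,
    forall i : 'I_m, dvdR (\prod_(0 <= l < i.+1) q l) ((N *m x - t) i 0).
Proof.
elim: m N q => [|m IHm] N q cop t; first by exists 0 => -[].
move: N t cop; rewrite -[m.+1]/(1 + m)%N => N t cop.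
have [u [v uv]] : exists u v, u * q 0%N + v * \det N = 1.
  by apply: coprimeR_bezout => //; rewrite -det_trail0; apply: cop.
(* Cramer's rule: [\adj N *m (v *: t)] solves [N x = t] modulo [q 0], as
   [v * \det N = 1 - u * q 0]. *)
have [w Nx0] : exists w, N *m (\adj N *m (v *: t)) - t = q 0%N *: w.
  exists (- (u *: t)); rewrite mulmxA mul_mx_adj mul_scalar_mx scalerA.
  have -> : \det N * v = 1 - u * q 0%N by rewrite -uv; ring.
  by rewrite scalerBl scale1r scalerN scalerA addrAC subrr add0r mulrC.
have cop' k : (k < m)%N -> coprimeR (q k.+1) (\det (trail k (drsubmx N))).
  by move=> km; rewrite -trail_drsubmx; apply: cop.
have [y dy] := IHm _ _ cop' (- dsubmx w).
exists (\adj N *m (v *: t) + q 0%N *: col_mx 0 y) => i.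
have -> : N *m (\adj N *m (v *: t) + q 0%N *: col_mx 0 y) - t =
    q 0%N *: (w + col_mx (ursubmx N *m y) (drsubmx N *m y)).
  rewrite mulmxDr addrAC Nx0 -scalemxAr -scalerDr -[N in N *m col_mx _ _]submxK.
  by rewrite mul_block_col !mulmx0 !add0r.
rewrite !mxE; case: (split_ordP i) => i' ->.
  by rewrite (ord1 i') /= big_nat1; exact: dvdR_mulr (dvdRR _).
rewrite big_nat_recl //=; apply: dvdR_mul2l.
by move: (dy i'); rewrite !mxE opprK addrC.
Qed.

(* For [q] the quotients [phi_(i+1) / phi_i], this puts [S *m L] in [G_Phi] (see [G_PhiP]). *)
Lemma lower_unitriangular_reduction n (S : 'M[R]_n) (q : nat -> R) :
    (forall k, (k.+1 < n)%N -> coprimeR (q k) (\det (trail k.+1 S))) ->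
  exists2 L, lower_unitriangular L &
    forall r s : 'I_n, (s < r)%N -> dvdR (\prod_(s <= l < r) q l) ((S *m L) r s).
Proof.
elim: n S q => [|n IHn] S q cop.
  by exists 1%:M; [split=> [[]|[]] | case].
move: S cop; rewrite -[n.+1]/(1 + n)%N => S cop.
have cop' k : (k.+1 < n)%N -> coprimeR (q k.+1) (\det (trail k.+1 (drsubmx S))).
  by move=> kn; rewrite -trail_drsubmx; apply: cop.
have [L lowL dSL] := IHn _ _ cop'.
have cop0 k : (k < n)%N -> coprimeR (q k) (\det (trail k (drsubmx S))).
  by move=> kn; rewrite -trail_drsubmx; apply: cop.
have [y dy] := mulmx_solvable_mod_prefix_prod cop0 (- dlsubmx S).
exists (block_mx 1%:M 0 y L); first exact: lower_unitriangular_block.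
rewrite -[S in S *m _]submxK mulmx_block !mulmx0 !mulmx1 !add0r => r s.
case: (split_ordP r) => r' ->; case: (split_ordP s) => s' ->;
  rewrite ?block_mxEul ?block_mxEur ?block_mxEdl ?block_mxEdr //=.
- by rewrite (ord1 r') (ord1 s').
- by rewrite (ord1 r').
- by rewrite (ord1 s') => _; move: (dy r'); rewrite opprK addrC.
- by rewrite ltn_add2l big_add1 => /dSL.
Qed.

End Reduction.

Lemma G_Phi_invmx (R : comUnitRingType) n (Phi H : 'M[R]_n) :
  G_Phi Phi H -> G_Phi Phi (invmx H).
Proof.
case=> unitH [K [unitK HK]]; split; first by rewrite unitmx_inv.
exists (invmx K); split; first by rewrite unitmx_inv.
by rewrite -[LHS](mulmxK unitK) -(mulmxA _ Phi) -HK mulmxA mulVmx // mul1mx.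
Qed.

Section DiagonalChain.
Variables (R : idomainType) (n : nat) (phi : 'rV[R]_n) (q : nat -> R).
Hypothesis phi_step : forall a b : 'I_n, (b : nat) = a.+1 -> phi 0 b = q a * phi 0 a.
Hypothesis phi_neq0 : forall i : 'I_n, phi 0 i != 0.

Lemma phi_prod (a b : 'I_n) : (a <= b)%N -> phi 0 b = (\prod_(a <= l < b) q l) * phi 0 a.
Proof.
move=> ab; have [d bE] : exists d, b = (a + d)%N :> nat by exists (b - a)%N; rewrite subnKC.
elim: d b bE {ab} => [|d IHd] b bE.
  by rewrite (_ : b = a) ?big_geq ?mul1r //; apply: ord_inj; rewrite bE addn0.
have ad_lt : (a + d < n)%N by have := ltn_ord b; lia.
rewrite (@phi_step (Ordinal ad_lt) b) /=; last by rewrite bE addnS.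
by rewrite (IHd (Ordinal ad_lt)) // bE addnS big_nat_recr ?leq_addr //= mulrA [q _ * _]mulrC.
Qed.

Lemma G_PhiP (H : 'M[R]_n) :
  G_Phi (diag_mx phi) H <->
  H \in unitmx /\ forall r s : 'I_n, (s < r)%N -> dvdR (\prod_(s <= l < r) q l) (H r s).
Proof.
split=> [[unitH [K [_ HK]]] | [unitH dH]].
  split=> // r s sr; exists (K r s); apply: (mulIf (phi_neq0 s)).
  move/matrixP/(_ r s): HK; rewrite mul_mx_diag mul_diag_mx !mxE => ->.
  by rewrite (phi_prod (ltnW sr)); ring.
have exK r s : exists c, H r s * phi 0 s == phi 0 r * c.
  case: (ltnP s r) => [sr | rs].
    by have [c ->] := dH r s sr; exists c; rewrite (phi_prod (ltnW sr)); apply/eqP; ring.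
  by exists (H r s * \prod_(r <= l < s) q l); rewrite (phi_prod rs); apply/eqP; ring.
pose K := \matrix_(r, s) xchoose (exK r s).
have HK : H *m diag_mx phi = diag_mx phi *m K.
  apply/matrixP => r s; rewrite mul_mx_diag mul_diag_mx !mxE.
  exact: eqP (xchooseP (exK r s)).
have det_phi : \det (diag_mx phi) != 0 by rewrite det_diag; apply/prodf_neq0 => i _.
split=> //; exists K; split=> //; rewrite unitmxE.
have : \det (diag_mx phi) * \det H = \det (diag_mx phi) * \det K.
  by rewrite -[in RHS]det_mulmx -HK !det_mulmx mulrC.
by move/(mulfI det_phi) <-; rewrite -unitmxE.
Qed.

Lemma G_Phi_coprime_trail (S H : 'M[R]_n) :
    G_Phi (diag_mx phi) H -> lower_unitriangular (H *m S) ->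
  forall i j : 'I_n, (j : nat) = i.+1 -> coprimeR (q i) (\det (trail j S)).
Proof.
move=> HG lowHS i j ji d dq dS.
have [unitG dG] := (G_PhiP (invmx H)).1 (G_Phi_invmx HG).
have [a da] : exists a, dvdR (q i) (\det (invmx H) - a * \det (trail j S)).
  have -> : S = invmx H *m (H *m S) by rewrite mulKmx //; case: HG.
  rewrite det_trail_mul_lower_unitriangular ?(ltnW (ltn_ord j)) //.
  apply: det_congr_trail (ltnW (ltn_ord j)) _ => r s /andP[sj jr].
  apply: dvdR_trans (dG r s (leq_trans sj jr)); apply: dvdR_prod_nat.
  by apply/andP; split; lia.
have dG1 : dvdR d (\det (invmx H)).
  rewrite -(subrK (a * \det (trail j S)) (\det (invmx H))).
  by apply: dvdRD; [apply: dvdR_trans da | apply: dvdR_mull].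
by rewrite unitmxE in unitG; rewrite -(mulVr unitG); apply: dvdR_mull.
Qed.

Lemma coprime_trail_G_Phi (HR : elementary_divisor_ring R) (S : 'M[R]_n) :
    S \in unitmx ->
    (forall i j : 'I_n, (j : nat) = i.+1 -> coprimeR (q i) (\det (trail j S))) ->
  exists H, G_Phi (diag_mx phi) H /\ lower_unitriangular (H *m S).
Proof.
move=> unitS cop; have [L lowL dSL] := lower_unitriangular_reduction HR (q := q) (S := S)
  (fun k kn => cop (Ordinal (ltnW kn)) (Ordinal kn) erefl).
have unitL : L \in unitmx by rewrite unitmxE det_lower_unitriangular ?unitr1.
have unitSL : S *m L \in unitmx by rewrite unitmx_mul unitS.
exists (invmx (S *m L)); split; first exact/G_Phi_invmx/G_PhiP.
by rewrite -[S in _ *m S](mulmxK unitL) mulKmx //; apply: lower_unitriangular_invmx.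
Qed.

End DiagonalChain.

Lemma dmx_ratios (R : comNzRingType) n (phi : 'rV[R]_n) :
  is_dmx (diag_mx phi) ->
  exists q : nat -> R, forall a b : 'I_n, (b : nat) = a.+1 -> phi 0 b = q a * phi 0 a.
Proof.
case: n phi => [|n] phi [_ dphi]; first by exists (fun=> 0) => [[]].
have ex_q k : exists c, (k < n)%N ==> (phi 0 (inord k.+1) == c * phi 0 (inord k)).
  have [kn|_] := ltnP k n; last by exists 0.
  have [|c] := dphi (inord k) (inord k.+1) (inord k) (inord k.+1) erefl erefl.
    by rewrite /= !inordK // ltnW.
  by rewrite !mxE !eqxx !mulr1n => ->; exists c; rewrite eqxx.
exists (fun k => xchoose (ex_q k)) => a b ba.
have an : (a < n)%N by rewrite -ltnS -ba.
by have := xchooseP (ex_q a); move: (xchoose _) => c; rewrite an -ba !inord_val => /eqP.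
Qed.

Theorem theorem2p8 (R : idomainType) (HR : elementary_divisor_ring R)
  (n : nat) (S : 'M[R]_n) (hS : S \in unitmx)
  (phi : 'rV[R]_n) (hd : is_dmx (diag_mx phi))
  (hns : \det (diag_mx phi) != 0) :
  (exists H : 'M[R]_n, G_Phi (diag_mx phi) H /\ lower_unitriangular (H *m S))
  <->
  (forall (i j : 'I_n), (j : nat) = i.+1 ->
     forall c : R, phi 0 j = c * phi 0 i ->
       coprimeR c (\det (trail j S))).
Proof.
have [q phi_step] := dmx_ratios hd.
have phi_neq0 i : phi 0 i != 0.
  by apply: contraNneq hns => phi0; rewrite det_diag (bigD1 i) //= phi0 mul0r.
split=> [[H [HG lowHS]] i j ji c phi_c | cop_c].
  have -> : c = q i by apply: (mulIf (phi_neq0 i)); rewrite -phi_c (phi_step _ _ ji).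
  exact: (G_Phi_coprime_trail phi_step phi_neq0 HG lowHS ji).
apply: (coprime_trail_G_Phi phi_step phi_neq0 HR hS) => i j ji.
exact/cop_c/phi_step.
Qed.
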